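(* Let $\boldsymbol\alpha,\boldsymbol\beta$ be multisets of $d$ rational numbers and $q$ a prime power with $(q-1)\alpha_i,(q-1)\beta_j\in\mathbb{Z}$. For every integer $m$, the quotients $$\frac{\prod_{i=1}^dg(m+\alpha_i\bar q)g(-m-\beta_i\bar q)}{g(|\boldsymbol\alpha-\boldsymbol\beta|\bar q)}\quad\text{and}\quad\frac{\prod_{i=1}^dg(m+\alpha_i\bar q)g(-m-\beta_i\bar q)}{\prod_{i=1}^dg((\alpha_i-\beta_i)\bar q)}$$ are algebraic integers lying in $\mathbb{Q}(\zeta_{q-1})$, where $|\boldsymbol\alpha-\boldsymbol\beta|=\sum_i(\alpha_i-\beta_i)$ and $\zeta_{q-1}$ is a primitive $(q-1)$-th root of unity.
   Context: Fix a nontrivial additive character $\psi_q$ of $\mathbb{F}_q$, a generator $\omega$ of the character group of $\mathbb{F}_q^\times$, $g(m)=\sum_{x\in\mathbb{F}_q^\times}\omega(x)^m\psi_q(x)$ for $m\in\mathbb{Z}$, and $\bar q=q-1$. *)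

From HB Require Import structures.
From mathcomp Require Import all_boot all_order all_algebra all_field.
Set Implicit Arguments. Unset Strict Implicit. Unset Printing Implicit Defensive.
Import Order.TTheory GRing.Theory Num.Theory.
Local Open Scope ring_scope.

Definition gauss (F : finFieldType) (psi omega : F -> algC) (m : int) : algC :=
  \sum_(x : F | x != 0) (omega x) ^ m * psi x.

Definition nontriv_add_char (F : finFieldType) (psi : F -> algC) : Prop :=
  [/\ psi 0 = 1, (forall x y, psi (x + y) = psi x * psi y) & exists x, psi x != 1].

(* omega is a multiplicative character of F^x generating the character group
   (of order q-1): omega^k is trivial on F^x only if (q-1) | k. *)
Definition gen_mult_char (F : finFieldType) (omega : F -> algC) : Prop :=
  [/\ omega 1 = 1,
      (forall x y, x != 0 -> y != 0 -> omega (x * y) = omega x * omega y) &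
      (forall k : nat, (forall x : F, x != 0 -> omega x ^+ k = 1) ->
                       (#|F|.-1 %| k)%N)].

Definition in_Qzeta (n : nat) (x : algC) : Prop :=
  exists2 z : algC, n.-primitive_root z &
    exists p : {poly rat}, x = (map_poly ratr p).[z].

Definition is_intQ (r : rat) : bool := r \is a Num.int.

From HB Require Import structures.
From mathcomp Require Import all_boot all_order all_algebra all_field.
From mathcomp Require Import ring.
Set Implicit Arguments. Unset Strict Implicit. Unset Printing Implicit Defensive.
Import Order.TTheory GRing.Theory Num.Theory.
Local Open Scope ring_scope.

(* Expanding a product of two Gauss sums gives the classical identity
   g(a) g(b) = J(a, b) g(a + b) + omega(-1)^b sum_x omega(x)^(a+b), where the
   Jacobi sum J(a, b) is a sum of (q-1)-th roots of unity; the second term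
   vanishes unless omega^(a+b) is trivial, in which case it is
   omega(-1)^b (q-1) and g(a + b) = -1.  Hence g(a) g(b) = r g(a + b) with r in
   Z[zeta_(q-1)].  Applying this to the factors g(m + alpha_i qb) and
   g(-m - beta_i qb), whose arguments add up to (alpha_i - beta_i) qb, gives the
   second quotient; telescoping the products gives the first one.  Only the fact
   that omega takes (q-1)-th roots of unity is used, not that it generates. *)

Definition AintQz (z x : algC) : Prop :=
  x \in Aint /\ exists p : {poly rat}, x = (map_poly ratr p).[z].

Section AintQz.

Variable z : algC.

Lemma AintQz0 : AintQz z 0.
Proof. split; first exact: rpred0. by exists 0; rewrite raddf0 horner0. Qed.

Lemma AintQz1 : AintQz z 1.
Proof. split; first exact: rpred1. by exists 1; rewrite rmorph1 hornerC. Qed.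

Lemma AintQzD x y : AintQz z x -> AintQz z y -> AintQz z (x + y).
Proof.
move=> [Ax [p xE]] [Ay [r yE]]; split; first exact: rpredD.
by exists (p + r); rewrite raddfD hornerD xE yE.
Qed.

Lemma AintQzN x : AintQz z x -> AintQz z (- x).
Proof.
move=> [Ax [p xE]]; split; first by rewrite -mulN1r rpredM // (Aint_int (-1)).
by exists (- p); rewrite raddfN hornerN xE.
Qed.

Lemma AintQzM x y : AintQz z x -> AintQz z y -> AintQz z (x * y).
Proof.
move=> [Ax [p xE]] [Ay [r yE]]; split; first exact: rpredM.
by exists (p * r); rewrite rmorphM hornerM xE yE.
Qed.

Lemma AintQz_nat n : AintQz z n%:R.
Proof. by elim: n => [|n IHn]; [exact: AintQz0 | rewrite mulrS; apply: AintQzD AintQz1 IHn]. Qed.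

Lemma AintQz_sum (I : finType) (P : pred I) (f : I -> algC) :
  (forall i, P i -> AintQz z (f i)) -> AintQz z (\sum_(i | P i) f i).
Proof. by move=> Af; apply: big_ind => //; [exact: AintQz0 | exact: AintQzD]. Qed.

Lemma AintQz_unity_root n y :
  (0 < n)%N -> n.-primitive_root z -> y ^+ n = 1 -> AintQz z y.
Proof.
move=> n_gt0 prim_z yn1; split.
  by apply: (Aint_unity_root n_gt0); apply/unity_rootP.
have [i ->] := prim_rootP prim_z yn1.
by exists 'X^i; rewrite map_polyXn hornerXn.
Qed.

(* Division by 0 is 0 in algC, so no nonvanishing of G is needed. *)
Lemma AintQz_mulfK r G : AintQz z r -> AintQz z (r * G / G).
Proof.
move=> Ar; have [->|G_neq0] := eqVneq G 0; last by rewrite mulfK.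
by rewrite invr0 mulr0; exact: AintQz0.
Qed.

End AintQz.

Lemma sum_nonzero_mull (F : finFieldType) (V : nmodType) (c : F) (G : F -> V) :
  c != 0 -> \sum_(x | x != 0) G x = \sum_(x | x != 0) G (c * x).
Proof.
move=> c_neq0; rewrite (reindex_inj (mulfI c_neq0)) /=; apply: eq_bigl => x.
by rewrite mulf_eq0 negb_or c_neq0.
Qed.

Lemma pred_card_finField_gt0 (F : finFieldType) : (0 < #|F|.-1)%N.
Proof. by have := finNzRing_gt1 F; case: #|F| => [|[|]]. Qed.

Lemma expf_pred_card (F : finFieldType) (x : F) : x != 0 -> x ^+ #|F|.-1 = 1.
Proof.
move=> x_neq0; apply: (mulIf x_neq0); rewrite mul1r -exprSr prednK ?expf_card //.
by have := finNzRing_gt1 F; case: #|F|.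
Qed.

Section GaussSums.

Variables (F : finFieldType) (psi omega : F -> algC).
Hypotheses (Hpsi : nontriv_add_char psi) (Homega : gen_mult_char omega).

Local Notation qb := #|F|.-1.
Local Notation g := (gauss psi omega).

Lemma omegaX (x : F) k : x != 0 -> omega (x ^+ k) = omega x ^+ k.
Proof.
have [omega1 omegaM _] := Homega; move=> x_neq0.
elim: k => [|k IHk]; first by rewrite !expr0.
by rewrite !exprS omegaM ?IHk // expf_neq0.
Qed.

Lemma omega_pred_card (x : F) : x != 0 -> omega x ^+ qb = 1.
Proof. by move=> x_neq0; rewrite -omegaX // expf_pred_card //; case: Homega. Qed.

Lemma omega_neq0 (x : F) : x != 0 -> omega x != 0.
Proof.
move=> x_neq0; apply: contra_eqN (omega_pred_card x_neq0) => /eqP->.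
by rewrite expr0n eqn0Ngt pred_card_finField_gt0 eq_sym oner_eq0.
Qed.

Lemma omegaz_pred_card (x : F) (k : int) : x != 0 -> (omega x ^ k) ^+ qb = 1.
Proof.
move=> x_neq0; rewrite -[_ ^+ qb]/((omega x ^ k) ^ qb%:Z) exprzAC.
by rewrite [omega x ^ _]omega_pred_card // exp1rz.
Qed.

Lemma omegazM (x y : F) (k : int) : x != 0 -> y != 0 ->
  omega (x * y) ^ k = omega x ^ k * omega y ^ k.
Proof.
have [_ omegaM _] := Homega; move=> x_neq0 y_neq0.
by rewrite omegaM // exprzMl // unitfE omega_neq0.
Qed.

Lemma sum_add_char : \sum_x psi x = 0.
Proof.
have [psi0 psiD [x0 psi_x0]] := Hpsi.
have shift : \sum_x psi x = psi x0 * \sum_x psi x.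
  rewrite {1}(reindex_inj (addrI x0)) /= mulr_sumr.
  by apply: eq_bigr => x _; rewrite psiD.
have : (1 - psi x0) * \sum_x psi x = 0 by rewrite mulrBl mul1r -shift subrr.
by move/eqP; rewrite mulf_eq0 subr_eq0 eq_sym (negPf psi_x0) => /eqP.
Qed.

Section TrivialExponent.

Variable c : int.
Hypothesis omega_c1 : forall x : F, x != 0 -> omega x ^ c = 1.

Lemma gauss_trivial : g c = -1.
Proof.
rewrite /gauss (eq_bigr psi); last by move=> x /omega_c1->; rewrite mul1r.
have := sum_add_char; rewrite (bigD1 0) //=; have [-> _ _] := Hpsi.
by move/eqP; rewrite addrC addr_eq0 => /eqP.
Qed.

Lemma sum_omegaz_trivial : \sum_(x : F | x != 0) omega x ^ c = qb%:R.
Proof.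
rewrite (eq_bigr (fun _ => 1)); last by move=> x /omega_c1.
by rewrite sumr_const -(cardC1 0); congr _%:R.
Qed.

End TrivialExponent.

Lemma sum_omegaz_nontrivial (c : int) (x0 : F) : x0 != 0 -> omega x0 ^ c != 1 ->
  \sum_(x : F | x != 0) omega x ^ c = 0.
Proof.
move=> x0_neq0 omega_x0.
pose S := \sum_(x : F | x != 0) omega x ^ c.
have shift : S = omega x0 ^ c * S.
  rewrite /S {1}(sum_nonzero_mull _ x0_neq0) mulr_sumr.
  by apply: eq_bigr => x x_neq0; rewrite omegazM.
have : (1 - omega x0 ^ c) * S = 0 by rewrite mulrBl mul1r -shift subrr.
by move/eqP; rewrite mulf_eq0 subr_eq0 eq_sym (negPf omega_x0) => /eqP.
Qed.

Lemma gauss_dilate (c : int) (u : F) : u != 0 ->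
  \sum_(x | x != 0) omega x ^ c * psi (x * u) = (omega u ^ c)^-1 * g c.
Proof.
move=> u_neq0; rewrite /gauss (sum_nonzero_mull (fun x => omega x ^ c * psi x) u_neq0).
rewrite mulr_sumr.
apply: eq_bigr => x x_neq0; rewrite omegazM // -!mulrA mulKf; last first.
  by rewrite expfz_neq0 // omega_neq0.
by rewrite [u * x]mulrC.
Qed.

Definition jacobi (a b : int) : algC :=
  \sum_(t | (t != 0) && (t != -1)) omega t ^ b * (omega (1 + t) ^ (a + b))^-1.

Lemma gauss_mulE (a b : int) :
  g a * g b = omega (-1) ^ b * \sum_(x : F | x != 0) omega x ^ (a + b)
              + jacobi a b * g (a + b).
Proof.
have [psi0 psiD _] := Hpsi.
rewrite /gauss mulr_suml.
under eq_bigr => x x_neq0.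
  rewrite (sum_nonzero_mull _ x_neq0) mulr_sumr.
  under eq_bigr => t t_neq0.
    rewrite omegazM //.
    have -> : omega x ^ a * psi x * (omega x ^ b * omega t ^ b * psi (x * t))
        = omega t ^ b * (omega x ^ (a + b) * psi (x * (1 + t))).
      by rewrite exprzDr ?unitfE ?omega_neq0 // mulrDr mulr1 psiD; ring.
    over.
  over.
rewrite /= exchange_big /=.
under eq_bigr => t _ do rewrite -mulr_sumr.
rewrite (bigD1 (-1)) /=; last by rewrite oppr_eq0 oner_eq0.
congr (_ * _ + _).
  by apply: eq_bigr => x _; rewrite subrr mulr0 psi0 mulr1.
rewrite /jacobi mulr_suml; apply: eq_bigr => t /andP[t_neq0 t_neqN1].
by rewrite gauss_dilate ?mulrA // addrC -[1]opprK subr_eq0.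
Qed.

Variable z : algC.
Hypothesis prim_z : qb.-primitive_root z.

Lemma AintQz_omegaz (x : F) (k : int) : x != 0 -> AintQz z (omega x ^ k).
Proof.
move=> x_neq0.
by apply: (AintQz_unity_root (pred_card_finField_gt0 F) prim_z); apply: omegaz_pred_card.
Qed.

Lemma AintQz_omegazV (x : F) (k : int) : x != 0 -> AintQz z (omega x ^ k)^-1.
Proof.
move=> x_neq0; apply: (AintQz_unity_root (pred_card_finField_gt0 F) prim_z).
by rewrite exprVn omegaz_pred_card // invr1.
Qed.

Lemma AintQz_jacobi (a b : int) : AintQz z (jacobi a b).
Proof.
apply: AintQz_sum => t /andP[t_neq0 t_neqN1].
apply: AintQzM; first exact: AintQz_omegaz.
by apply: AintQz_omegazV; rewrite addrC -[1]opprK subr_eq0.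
Qed.

Lemma gauss_mul_ratio (a b : int) :
  exists2 r, AintQz z r & g a * g b = r * g (a + b).
Proof.
rewrite gauss_mulE.
have [omega_ab1 | omega_ab] :=
  boolP [forall x : F, (x != 0) ==> (omega x ^ (a + b) == 1)].
  have omega_ab1' x : x != 0 -> omega x ^ (a + b) = 1.
    by move=> x_neq0; apply/eqP; move/forallP/(_ x): omega_ab1; rewrite x_neq0.
  exists (jacobi a b - omega (-1) ^ b * qb%:R).
    apply: AintQzD; first exact: AintQz_jacobi.
    apply/AintQzN/AintQzM; last exact: AintQz_nat.
    by apply: AintQz_omegaz; rewrite oppr_eq0 oner_eq0.
  by rewrite sum_omegaz_trivial // gauss_trivial //; ring.
have /existsP[x0] := omega_ab; rewrite negb_imply => /andP[x0_neq0 /eqP omega_x0].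
exists (jacobi a b); first exact: AintQz_jacobi.
by rewrite (sum_omegaz_nontrivial x0_neq0) ?mulr0 ?add0r //; apply/eqP.
Qed.

Lemma prod_gauss_pairs_sum (I : finType) (A B : I -> int) :
  exists2 R, AintQz z R &
    \prod_i (g (A i) * g (B i)) = R * g (\sum_i (A i + B i)).
Proof.
pose P (y : algC) (c : int) := exists2 R, AintQz z R & y = R * g c.
apply: (@big_rec2 _ _ P).
  exists (-1); first exact/AintQzN/AintQz1.
  by rewrite gauss_trivial ?mulrNN ?mulr1 // => x _; rewrite expr0z.
move=> i y c _ [R AR ->].
have [r1 Ar1 gBc] := gauss_mul_ratio (B i) c.
have [r2 Ar2 gABc] := gauss_mul_ratio (A i) (B i + c).
exists (R * r1 * r2); first by apply/AintQzM/Ar2/AintQzM.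
transitivity (R * g (A i) * (g (B i) * g c)); first ring.
rewrite gBc; transitivity (R * r1 * (g (A i) * g (B i + c))); first ring.
by rewrite gABc addrA; ring.
Qed.

Lemma prod_gauss_pairs (I : finType) (A B : I -> int) :
  exists2 R, AintQz z R &
    \prod_i (g (A i) * g (B i)) = R * \prod_i g (A i + B i).
Proof.
pose P (y y' : algC) := exists2 R, AintQz z R & y = R * y'.
apply: (@big_rec2 _ _ P); first by exists 1; [exact: AintQz1 | rewrite mul1r].
move=> i y y' _ [R AR ->].
have [r Ar gAB] := gauss_mul_ratio (A i) (B i).
by exists (r * R); [exact: AintQzM | rewrite gAB; ring].
Qed.

End GaussSums.

Lemma floor_mul_intQ (n r : rat) : is_intQ (n * r) -> (Num.floor (r * n))%:~R = r * n.
Proof. by move=> nr_int; rewrite floorK // mulrC. Qed.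

Theorem mainTheorem8 (F : finFieldType) (psi omega : F -> algC)
    (Hpsi : nontriv_add_char psi) (Homega : gen_mult_char omega)
    (d : nat) (alpha beta : 'I_d -> rat)
    (Halpha : forall i, is_intQ ((#|F|.-1)%:R * alpha i))
    (Hbeta : forall i, is_intQ ((#|F|.-1)%:R * beta i))
    (m : int) :
  let qb : rat := (#|F|.-1)%:R in
  let g := gauss psi omega in
  let num := \prod_(i < d)
      (g (m + Num.floor (alpha i * qb)) * g (- m - Num.floor (beta i * qb))) in
  let q1 := num / g (Num.floor ((\sum_(i < d) (alpha i - beta i)) * qb)) in
  let q2 := num / \prod_(i < d) g (Num.floor ((alpha i - beta i) * qb)) in
  [/\ q1 \in Aint, in_Qzeta #|F|.-1 q1, q2 \in Aint & in_Qzeta #|F|.-1 q2].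
Proof.
move=> qb g num q1 q2.
have [z prim_z] := C_prim_root_exists (pred_card_finField_gt0 F).
pose A i := m + Num.floor (alpha i * qb).
pose B i := - m - Num.floor (beta i * qb).
have qbAB i : (alpha i - beta i) * qb = (A i + B i)%:~R.
  rewrite mulrBl -(floor_mul_intQ (Halpha i)) -(floor_mul_intQ (Hbeta i)).
  by rewrite -intrB /A /B; congr _%:~R; ring.
have floor_i i : Num.floor ((alpha i - beta i) * qb) = A i + B i.
  by rewrite qbAB intrKfloor.
have floor_sum : Num.floor ((\sum_i (alpha i - beta i)) * qb) = \sum_i (A i + B i).
  by rewrite mulr_suml (eq_bigr _ (fun i _ => qbAB i)) -rmorph_sum intrKfloor.
have numE : num = \prod_i (g (A i) * g (B i)) by [].
suff [[Aq1 [p1 q1E]] [Aq2 [p2 q2E]]] : AintQz z q1 /\ AintQz z q2.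
  by split=> //; exists z => //; [exists p1 | exists p2].
split.
  have [R AR numR] := prod_gauss_pairs_sum Hpsi Homega prim_z A B.
  by rewrite /q1 numE numR floor_sum; apply: AintQz_mulfK.
have [R AR numR] := prod_gauss_pairs Hpsi Homega prim_z A B.
rewrite /q2 numE numR (eq_bigr _ (fun i _ => congr1 g (floor_i i))).
exact: AintQz_mulfK.
Qed.
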